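(* Let $G$ be a finite group with subgroups $H_1,H_2$, and let $\Xi$ be a $G$-solitary linear character of $H_1$. There exists a linear character $\chi$ of $H_2$ with $\mathrm{Ind}^G_{H_1}\Xi\cong\mathrm{Ind}^G_{H_2}\chi$ if and only if $H_1$ and $H_2$ are conjugate subgroups of $G$.
   Context: A monomial structure on a representation $\rho\colon G\to\mathrm{Aut}(V)$ is a decomposition $V=\bigoplus_{x\in\Omega}\mathcal L_x$ into one-dimensional subspaces such that $G$ permutes the lines $\mathcal L_x$; the set $\{\mathcal L_x\}$ is then a $G$-set, and an isomorphism of monomial structures is an isomorphism of $G$-sets. A linear character $\Xi$ of $H\le G$ is $G$-solitary if $\mathrm{Ind}^G_H\Xi$ has a unique monomial structure up to isomorphism. *)

From mathcomp Require Import all_boot all_order all_algebra all_fingroup all_solvable all_field all_character.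
Set Implicit Arguments. Unset Strict Implicit. Unset Printing Implicit Defensive.
Import GRing.Theory Num.Theory.
Local Open Scope ring_scope.

Section Monomial.
Variables (gT : finGroupType) (G : {group gT}) (n : nat).
Variable rG : mx_representation algC G n.

(* A monomial structure on rG (row vectors, right action x |-> x *m rG g):
   a basis (rows of the invertible matrix B) whose lines L_i = <row i B>
   decompose V = 'rV_n and are permuted by every g in G, i.e. the image
   of the line L_i under g is contained in (hence equal to) some line L_j. *)
Definition monomial_structure (B : 'M[algC]_n) : Prop :=
  B \in unitmx /\
  forall g, g \in G -> forall i : 'I_n, exists j : 'I_n,
    (row i B *m rG g <= row j B)%MS.

(* The G-set of lines of B: g sends line i to line j iff L_i * g = L_j
   (equivalently L_i * g <= L_j).  An isomorphism of monomial structures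
   is an isomorphism of these G-sets: a bijection of the lines commuting
   with the G-actions. *)
Definition iso_monomial_structure (B1 B2 : 'M[algC]_n) : Prop :=
  exists f : {perm 'I_n},
    forall g, g \in G -> forall i j : 'I_n,
      (row i B1 *m rG g <= row j B1)%MS <-> (row (f i) B2 *m rG g <= row (f j) B2)%MS.

End Monomial.

Definition G_solitary (gT : finGroupType) (G H : {group gT}) (xi : 'CF(H)) : Prop :=
  forall (n : nat) (rG : mx_representation algC G n),
    cfRepr rG = 'Ind[G] xi ->
    (exists B, monomial_structure rG B) /\
    (forall B1 B2, monomial_structure rG B1 -> monomial_structure rG B2 ->
       iso_monomial_structure rG B1 B2).

From mathcomp Require Import all_boot all_order all_algebra all_fingroup all_solvable all_field all_character.
Set Implicit Arguments. Unset Strict Implicit. Unset Printing Implicit Defensive.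
Import GRing.Theory.
Local Open Scope ring_scope.

(* For a linear character phi of H <= G, Ind_H^G phi is afforded by the
   monomial representation g |-> (phi (t_i g t_j^-1))_(i,j), where (t_i) is a
   right transversal of H in G and phi is extended by 0 outside H.  Hence every
   representation affording Ind_H^G phi carries a monomial structure whose
   line stabilisers are the conjugates H^(t_i).  Isomorphic monomial
   structures have the same line stabilisers (up to the bijection of lines),
   so if Ind xi = Ind chi with xi solitary, some line stabiliser is conjugate
   both to H1 and to H2.  Conversely, inducing the conjugate of xi from a
   conjugate of H1 gives back Ind xi. *)

Section RcosetRep.

Variables (gT : finGroupType) (G H : {group gT}).
Local Open Scope group_scope.

Definition rcoset_rep (i : 'I_#|G : H|) : gT := repr (enum_val i).

Lemma rcoset_repK i : H :* rcoset_rep i = enum_val i.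
Proof.
by rewrite /rcoset_rep; have /rcosetsP[x _ ->] := enum_valP i; rewrite rcoset_repr.
Qed.

Lemma mem_rcoset_rep x j :
  (x * (rcoset_rep j)^-1 \in H) = (H :* x == enum_val j).
Proof. by rewrite -mem_rcoset -rcoset_repK; apply/rcoset_eqP/eqP. Qed.

Lemma rcoset_rep_uniq x j k :
  x * (rcoset_rep j)^-1 \in H -> x * (rcoset_rep k)^-1 \in H -> j = k.
Proof. by rewrite !mem_rcoset_rep => /eqP-> /eqP/enum_val_inj. Qed.

Lemma rcoset_rep_exists x : x \in G -> exists j, x * (rcoset_rep j)^-1 \in H.
Proof.
move=> Gx; have Hx : H :* x \in rcosets H G by rewrite -rcosetE imset_f.
by exists (enum_rank_in Hx (H :* x)); rewrite mem_rcoset_rep enum_rankK_in.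
Qed.

Hypothesis sHG : H \subset G.

Lemma rcoset_rep_in i : rcoset_rep i \in G.
Proof.
have /rcosetsP[x Gx defHx] := enum_valP i.
have : rcoset_rep i \in H :* x by rewrite /rcoset_rep defHx mem_repr_rcoset.
by case/rcosetP=> h Hh ->; rewrite groupM // (subsetP sHG).
Qed.

Lemma sum_rcoset_reps (V : nmodType) (F : gT -> V) :
  (\sum_(y in G) F y = \sum_i \sum_(h in H) F (h * rcoset_rep i)%g)%R.
Proof.
have [/eqP defG tiG _] := and3P (rcosets_partition sHG).
rewrite -[in LHS]defG big_trivIset // big_enum_val; apply: eq_bigr => i _.
by rewrite -rcoset_repK -rcosetE big_imset //= => a b _ _; apply: mulIg.
Qed.

End RcosetRep.

Section LineStabiliser.

Variables (gT : finGroupType) (G : {group gT}) (n : nat).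
Variable rG : mx_representation algC G n.

Definition line_stab (B : 'M[algC]_n) (i : 'I_n) : {set gT} :=
  [set g in G | (row i B *m rG g <= row i B)%MS].

Lemma iso_monomial_line_stab B1 B2 : iso_monomial_structure rG B1 B2 ->
  exists f : {perm 'I_n}, forall i, line_stab B1 i = line_stab B2 (f i).
Proof.
case=> f iso_f; exists f => i; apply/setP=> g; rewrite !inE.
by apply: andb_id2l => Gg; apply/idP/idP => /(iso_f g Gg i i).
Qed.

End LineStabiliser.

Lemma row_sub_row_unitmx (F : fieldType) n (B : 'M[F]_n) i j :
  B \in unitmx -> (row j B <= row i B)%MS = (j == i).
Proof.
move=> uB; apply/idP/eqP=> [|-> //]; move/(submxMr (invmx B)).
rewrite -!row_mul mulmxV // !row1 => /sub_rVP[c /rowP/(_ j)].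
rewrite !mxE !eqxx /=; have [// | _] := eqVneq j i.
by rewrite mulr0 => /eqP; rewrite oner_eq0.
Qed.

Section MonomialRepresentation.

Variables (gT : finGroupType) (G H : {group gT}) (phi : 'CF(H)).
Hypotheses (sHG : H \subset G) (lin_phi : phi \is a linear_char).
Local Notation t := (@rcoset_rep _ G H).

Definition monomial_mx (g : gT) : 'M[algC]_#|G : H|%g :=
  \matrix_(i, j) phi (t i * g * (t j)^-1)%g.

Lemma row_monomial_mx g i j : (t i * g * (t j)^-1 \in H)%g ->
  row i (monomial_mx g) = phi (t i * g * (t j)^-1)%g *: 'e_j.
Proof.
move=> Hj; apply/rowP=> k; rewrite !mxE eqxx /=.
have [-> | nkj] := eqVneq k j; first by rewrite mulr1.
rewrite mulr0 cfun0 //; apply: contra nkj => Hk.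
by rewrite (rcoset_rep_uniq Hk Hj).
Qed.

Lemma monomial_mx_repr : mx_repr G monomial_mx.
Proof.
split=> [|g h Gg Gh].
  apply/row_matrixP=> i; rewrite row1 (@row_monomial_mx _ i i) mulg1 mulgV //.
  by rewrite lin_char1 // scale1r.
apply/row_matrixP=> i; have tiG := rcoset_rep_in sHG i.
have [j Hj] := rcoset_rep_exists H (groupM tiG Gg).
have [k Hk] := rcoset_rep_exists H (groupM (rcoset_rep_in sHG j) Gh).
have Hjk : (t i * (g * h) * (t k)^-1
            = (t i * g * (t j)^-1) * (t j * h * (t k)^-1))%g.
  by rewrite !mulgA mulgKV.
rewrite row_mul (row_monomial_mx Hj) -scalemxAl -rowE (row_monomial_mx Hk).
rewrite (row_monomial_mx (j := k)) Hjk; last exact: groupM.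
by rewrite lin_charM // scalerA.
Qed.

Definition monomial_rep := MxRepresentation monomial_mx_repr.

Lemma cfRepr_monomial : cfRepr monomial_rep = 'Ind[G] phi.
Proof.
apply/cfun_inP=> x Gx; rewrite cfunE Gx mulr1n cfIndE // (reindex_inj invg_inj).
rewrite (eq_bigl [in G]) => [|y]; last by rewrite /= groupV.
rewrite (sum_rcoset_reps sHG) mulrC -(mulfK (neq0CG H) (\tr _)) mulr_suml.
congr (_ * _); apply: eq_bigr => i _; rewrite mxE mulr_natr -sumr_const.
apply: eq_bigr => h Hh; rewrite invMg conjgM -(cfunJ _ _ (groupVr Hh)).
by rewrite [(x ^ _)%g]conjgE invgK mulgA.
Qed.

Lemma monomial_structure_Ind n (rG : mx_representation algC G n) :
  cfRepr rG = 'Ind[G] phi ->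
  exists2 B, monomial_structure rG B &
    forall i, exists2 a, a \in G & line_stab rG B i = (H :^ a)%g.
Proof.
rewrite -cfRepr_monomial => /esym/eqP/cfRepr_rsimP[B def_n free_B simB].
subst n; have uB : B \in unitmx by rewrite -row_free_unit.
have rowB g i j : g \in G -> (t i * g * (t j)^-1 \in H)%g ->
    row i B *m rG g = phi (t i * g * (t j)^-1)%g *: row j B.
  move=> Gg Hj; rewrite -row_mul -simB // row_mul (row_monomial_mx Hj).
  by rewrite -scalemxAl -rowE.
exists B.
  split=> // g Gg i.
  have [j Hj] := rcoset_rep_exists H (groupM (rcoset_rep_in sHG i) Gg).
  by exists j; rewrite (rowB g i j) // scalemx_sub.
move=> i; have tiG := rcoset_rep_in sHG i; exists (t i) => //.
have sHtG : (H :^ t i \subset G)%g by rewrite -(conjGid tiG) conjSg.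
apply/setP=> g; rewrite inE; have [Gg | nGg] := boolP (g \in G); last first.
  by apply/esym/negbTE; apply: contra nGg => /(subsetP sHtG).
have [j Hj] := rcoset_rep_exists H (groupM tiG Gg).
rewrite /= (rowB g i j) // (eqmx_scale _ (lin_char_neq0 lin_phi Hj)).
rewrite row_sub_row_unitmx // mem_conjg conjgE invgK mulgA.
rewrite mem_rcoset_rep in Hj.
by rewrite mem_rcoset_rep (eqP Hj) (inj_eq enum_val_inj).
Qed.

End MonomialRepresentation.

Lemma cfInd_conj_isom (gT : finGroupType) (G H : {group gT}) (phi : 'CF(H)) g :
  H \subset G -> g \in G -> 'Ind[G] (cfIsom (conj_isom H g) phi) = 'Ind[G] phi.
Proof.
move=> sHG Gg; have nGg := subsetP (normG G) g Gg.
by rewrite (cfIndIsom (norm_conj_isom nGg)) // -cfConjgEin cfConjg_id.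
Qed.

Unset Implicit Arguments.

Theorem lemma4p4 (gT : finGroupType) (G H1 H2 : {group gT}) (xi : 'CF(H1)) :
  H1 \subset G -> H2 \subset G ->
  xi \is a linear_char -> G_solitary G xi ->
  ((exists2 chi : 'CF(H2), chi \is a linear_char & 'Ind[G] xi = 'Ind[G] chi)
   <-> (exists2 g, g \in G & H2 :=: (H1 :^ g)%g)).
Proof.
move=> sH1G sH2G lin_xi solitary_xi.
split=> [[chi lin_chi Ind_xi_chi] | [g Gg defH2]].
  have rG_xi := cfRepr_monomial sH1G lin_xi.
  have rG_chi : cfRepr (monomial_rep sH1G lin_xi) = 'Ind[G] chi by rewrite rG_xi.
  have [B1 mB1 stabB1] := monomial_structure_Ind sH1G lin_xi rG_xi.
  have [B2 mB2 stabB2] := monomial_structure_Ind sH2G lin_chi rG_chi.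
  have iso_B12 := (solitary_xi _ _ rG_xi).2 B1 B2 mB1 mB2.
  have [f stab_f] := iso_monomial_line_stab iso_B12.
  pose i0 : 'I_#|G : H1|%g := Ordinal (indexg_gt0 G H1).
  have [a Ga stab_a] := stabB1 i0; have [b Gb stab_b] := stabB2 (f i0).
  exists (a * b^-1)%g; first by rewrite groupM ?groupV.
  by rewrite conjsgM -stab_a stab_f stab_b conjsgK.
have -> : H2 = (H1 :^ g)%G by apply: val_inj.
exists (cfIsom (conj_isom H1 g) xi); first by rewrite cfIsom_lin_char.
by rewrite (cfInd_conj_isom xi sH1G Gg).
Qed.
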